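(* Let $\mathbb{H}$ be a finite-dimensional complex Hilbert space with $\dim\mathbb{H}\ge2$, let $|X\rangle\in\mathbb{H}^{\otimes3}$ be a known unit vector, let $c_1,c_2>0$, and let $\alpha,\beta$ be nonzero complex numbers with $|\alpha|^2+|\beta|^2=1$, $|\mu\rangle=\alpha|0\rangle+\beta|1\rangle\in\mathbb{C}^2$. Then there exists a probabilistic quantum transformation $\mathcal{F}$ from $\mathbb{C}^2\otimes\mathbb{H}^{\otimes2}\otimes\mathbb{H}^{\otimes2}$ to $\mathbb{H}$, independent of $\alpha,\beta,\psi,\phi$, such that for all unit vectors $|\psi\rangle,|\phi\rangle\in\mathbb{H}$ satisfying $$|\langle X|(|\psi\rangle|\phi\rangle|\psi\rangle)|^2=c_1,\qquad |\langle X|(|\phi\rangle|\psi\rangle|\phi\rangle)|^2=c_2,$$ and all such $\alpha,\beta$, one has $\mathcal{F}(\rho_\mu\otimes\rho_\psi^{\otimes2}\otimes\rho_\phi^{\otimes2})=p\,\rho_\varphi$ where $$|\varphi\rangle\propto\alpha e^{i\theta_1}|\psi\rangle+\beta e^{i\theta_2}|\phi\rangle,\quad e^{i\theta_1}=\frac{\langle X|(|\phi\rangle|\psi\rangle|\phi\rangle)}{|\langle X|(|\phi\rangle|\psi\rangle|\phi\rangle)|},\quad e^{i\theta_2}=\frac{\langle X|(|\psi\rangle|\phi\rangle|\psi\rangle)}{|\langle X|(|\psi\rangle|\phi\rangle|\psi\rangle)|},$$ with success probability $p=\frac{c_1c_2}{c_1+c_2}\,\big\|\alpha e^{i\theta_1}|\psi\rangle+\beta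 e^{i\theta_2}|\phi\rangle\big\|^2$ (assumed nonzero).
   Context: For a unit vector $|\psi\rangle$, $\rho_\psi=|\psi\rangle\langle\psi|$; $|\varphi\rangle\propto|\chi\rangle$ means $|\varphi\rangle$ is the normalization of $|\chi\rangle$ up to a global phase. A probabilistic quantum transformation from $\mathbb{H}_1$ to $\mathbb{H}_2$ is a completely positive, trace-non-increasing linear map from operators on $\mathbb{H}_1$ to operators on $\mathbb{H}_2$. *)

(* Complex scalars: an arbitrary numClosedFieldType C
   (e.g. algC); Hilbert space H = 'cV[C]_d. *)
From HB Require Import structures.
From mathcomp Require Import all_boot all_order all_algebra.
Set Implicit Arguments. Unset Strict Implicit. Unset Printing Implicit Defensive.
Import Order.TTheory GRing.Theory Num.Theory.
Local Open Scope ring_scope.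

Section QDefs.
Variable C : numClosedFieldType.

Definition adj m n (A : 'M[C]_(m, n)) : 'M[C]_(n, m) := (map_mx Num.conj A)^T.

Definition inner n (x y : 'cV[C]_n) : C := (adj x *m y) 0 0.

Definition norm2 n (x : 'cV[C]_n) : C := inner x x.

Definition dm n (x : 'cV[C]_n) : 'M[C]_n := x *m adj x.

(* decomposition of an index of 'I_(m*n) into a pair (inverse of mxvec_index) *)
Definition idx_pair m n (k : 'I_(m * n)) : 'I_m * 'I_n :=
  enum_val (cast_ord (esym (mxvec_cast m n)) k).

(* Kronecker (tensor) product of matrices, index (i1,i2) <-> mxvec_index i1 i2 *)
Definition kron m1 n1 m2 n2 (A : 'M[C]_(m1, n1)) (B : 'M[C]_(m2, n2))
  : 'M[C]_(m1 * m2, n1 * n2) :=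
  \matrix_(i, j) (A (idx_pair i).1 (idx_pair j).1 * B (idx_pair i).2 (idx_pair j).2).

Definition psd n (A : 'M[C]_n) : Prop :=
  forall x : 'cV[C]_n, 0 <= (adj x *m A *m x) 0 0.

(* ampliation (id_k (x) F) acting on operators on C^k (x) C^n *)
Definition ampl k n m (F : 'M[C]_n -> 'M[C]_m) (A : 'M[C]_(k * n)) : 'M[C]_(k * m) :=
  \sum_(a < k) \sum_(b < k)
     kron (delta_mx a b : 'M[C]_k)
          (F (\matrix_(i, j) A (mxvec_index a i) (mxvec_index b j))).

Definition is_linear n m (F : 'M[C]_n -> 'M[C]_m) : Prop :=
  forall (a : C) (A B : 'M[C]_n), F (a *: A + B) = a *: F A + F B.

Definition completely_positive n m (F : 'M[C]_n -> 'M[C]_m) : Prop :=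
  forall (k : nat) (A : 'M[C]_(k * n)), psd A -> psd (ampl F A).

Definition trace_nonincreasing n m (F : 'M[C]_n -> 'M[C]_m) : Prop :=
  forall A : 'M[C]_n, psd A -> \tr (F A) <= \tr A.

Definition prob_qt n m (F : 'M[C]_n -> 'M[C]_m) : Prop :=
  is_linear F /\ completely_positive F /\ trace_nonincreasing F.

Definition ket0 : 'cV[C]_2 := delta_mx 0 0.
Definition ket1 : 'cV[C]_2 := delta_mx 1 0.

End QDefs.

From HB Require Import structures.
From mathcomp Require Import all_boot all_order all_algebra.
From mathcomp Require Import ring.
Import Order.TTheory GRing.Theory Num.Theory.
Local Open Scope ring_scope.

Set Implicit Arguments. Unset Strict Implicit. Unset Printing Implicit Defensive.

(* The transformation has a single Kraus operator [K].  On the control state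
   [|0>], [K] contracts [<X|] against the registers holding [phi psi phi] and
   outputs the remaining copy of [psi], giving [<X|phi psi phi> psi =
   sqrt c2 e^(i theta1) psi]; on [|1>] it symmetrically gives
   [sqrt c1 e^(i theta2) phi].  Weighting the two branches by
   [sqrt (c1 / (c1 + c2))] and [sqrt (c2 / (c1 + c2))] makes [K K^* = 1], so
   [A |-> K A K^*] is completely positive and trace non-increasing, and it maps
   the input to the unnormalised pure state of
   [sqrt (c1 c2 / (c1 + c2)) (alpha e^(i theta1) psi + beta e^(i theta2) phi)]. *)

Section Adjoint.
Variable C : numClosedFieldType.

Lemma adjE m n (A : 'M[C]_(m, n)) i j : adj A i j = (A j i)^*.
Proof. by rewrite !mxE. Qed.

Lemma adjK m n (A : 'M[C]_(m, n)) : adj (adj A) = A.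
Proof. by apply/matrixP => i j; rewrite !adjE conjCK. Qed.

Lemma adjM m n p (A : 'M[C]_(m, n)) (B : 'M[C]_(n, p)) :
  adj (A *m B) = adj B *m adj A.
Proof.
apply/matrixP => i j; rewrite adjE !mxE rmorph_sum; apply: eq_bigr => k _.
by rewrite !adjE rmorphM mulrC.
Qed.

Lemma adjB m n (A B : 'M[C]_(m, n)) : adj (A - B) = adj A - adj B.
Proof. by apply/matrixP => i j; rewrite !mxE rmorphB. Qed.

Lemma adjZ m n a (A : 'M[C]_(m, n)) : adj (a *: A) = a^* *: adj A.
Proof. by apply/matrixP => i j; rewrite !mxE rmorphM. Qed.

Lemma adj1 n : adj (1%:M : 'M[C]_n) = 1%:M.
Proof. by apply/matrixP => i j; rewrite !mxE conjC_nat eq_sym. Qed.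

Lemma adj_delta_col n (i : 'I_n) : adj (delta_mx i 0 : 'cV[C]_n) = delta_mx 0 i.
Proof. by apply/matrixP => r s; rewrite adjE !mxE conjC_nat andbC. Qed.

Lemma dmZ n a (v : 'cV[C]_n) : dm (a *: v) = (a * a^*) *: dm v.
Proof. by rewrite /dm adjZ -scalemxAl -scalemxAr scalerA. Qed.

Lemma norm2_ge0 n (v : 'cV[C]_n) : 0 <= norm2 v.
Proof.
rewrite /norm2 /inner mxE; apply: sumr_ge0 => i _.
by rewrite adjE mulrC mul_conjC_ge0.
Qed.

Lemma psd_diag_ge0 n (A : 'M[C]_n) i : psd A -> 0 <= A i i.
Proof. by move=> /(_ (delta_mx i 0)); rewrite adj_delta_col -rowE -colE !mxE. Qed.

Lemma psd_trace_ge0 n (A : 'M[C]_n) : psd A -> 0 <= \tr A.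
Proof. by move=> hA; apply: sumr_ge0 => i _; exact: psd_diag_ge0. Qed.

End Adjoint.

Section Kronecker.
Variable C : numClosedFieldType.

Lemma idx_pairK m n (i : 'I_m) (j : 'I_n) : idx_pair (mxvec_index i j) = (i, j).
Proof. by rewrite /idx_pair /mxvec_index cast_ordK enum_rankK. Qed.

Lemma sum_mxvec_index m n (f : 'I_(m * n) -> C) :
  \sum_k f k = \sum_i \sum_j f (mxvec_index i j).
Proof.
rewrite (reindex (uncurry (@mxvec_index m n))) /=; last exact: curry_mxvec_bij.
by rewrite pair_big /=; apply: eq_bigr => -[i j].
Qed.

Lemma kronE m1 n1 m2 n2 (A : 'M[C]_(m1, n1)) (B : 'M[C]_(m2, n2)) i1 i2 j1 j2 :
  kron A B (mxvec_index i1 i2) (mxvec_index j1 j2) = A i1 j1 * B i2 j2.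
Proof. by rewrite mxE !idx_pairK. Qed.

Lemma kron_colE m n (x : 'cV[C]_m) (y : 'cV[C]_n) i1 i2 k :
  kron x y (mxvec_index i1 i2) k = x i1 0 * y i2 0.
Proof. by rewrite mxE idx_pairK !ord1. Qed.

Lemma kron_dm m n (x : 'cV[C]_m) (y : 'cV[C]_n) :
  kron (dm x) (dm y) = dm (kron x y).
Proof.
apply/matrixP => r s.
case/mxvec_indexP: r => i1 i2; case/mxvec_indexP: s => j1 j2.
by rewrite kronE !mxE !big_ord1 !adjE !kron_colE rmorphM mulrACA.
Qed.

Lemma sum_mul_eqr n (i : 'I_n) (f : 'I_n -> C) : \sum_r f r * (r == i)%:R = f i.
Proof.
by rewrite (bigD1 i) //= eqxx mulr1 big1 ?addr0 // => r /negbTE ->; rewrite mulr0.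
Qed.

Lemma adj_kron m1 n1 m2 n2 (A : 'M[C]_(m1, n1)) (B : 'M[C]_(m2, n2)) :
  adj (kron A B) = kron (adj A) (adj B).
Proof.
apply/matrixP => r s.
case/mxvec_indexP: r => i1 i2; case/mxvec_indexP: s => j1 j2.
by rewrite adjE !kronE !adjE rmorphM.
Qed.

Lemma mul_kron1mxE k m n p (K : 'M[C]_(m, n)) (M : 'M[C]_(k * n, p)) a i s :
  (kron (1%:M : 'M_k) K *m M) (mxvec_index a i) s
    = \sum_t K i t * M (mxvec_index a t) s.
Proof.
rewrite mxE sum_mxvec_index (bigD1 a) //= [X in _ + X]big1 ?addr0 => [|b nba]; last first.
  by apply: big1 => t _; rewrite kronE mxE eq_sym (negbTE nba) mul0r mul0r.
by apply: eq_bigr => t _; rewrite kronE mxE eqxx mul1r.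
Qed.

Lemma mulmx_kron1E k m n p (M : 'M[C]_(p, k * n)) (K : 'M[C]_(n, m)) r b j :
  (M *m kron (1%:M : 'M_k) K) r (mxvec_index b j)
    = \sum_u M r (mxvec_index b u) * K u j.
Proof.
rewrite mxE sum_mxvec_index (bigD1 b) //= [X in _ + X]big1 ?addr0 => [|a nab]; last first.
  by apply: big1 => u _; rewrite kronE mxE (negbTE nab) mul0r mulr0.
by apply: eq_bigr => u _; rewrite kronE mxE eqxx mul1r.
Qed.

End Kronecker.

Section Sandwich.
Variable C : numClosedFieldType.

Definition sandwich n m (K : 'M[C]_(m, n)) (A : 'M[C]_n) : 'M[C]_m :=
  K *m A *m adj K.

Lemma sandwich_dm n m (K : 'M[C]_(m, n)) (x : 'cV[C]_n) :
  sandwich K (dm x) = dm (K *m x).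
Proof. by rewrite /sandwich /dm adjM !mulmxA. Qed.

Lemma sandwich_is_linear n m (K : 'M[C]_(m, n)) : is_linear (sandwich K).
Proof. by move=> a A B; rewrite /sandwich mulmxDr mulmxDl -scalemxAr -scalemxAl. Qed.

Lemma psd_sandwich n m (K : 'M[C]_(m, n)) A : psd A -> psd (sandwich K A).
Proof.
move=> psdA x.
have -> : adj x *m sandwich K A *m x = adj (adj K *m x) *m A *m (adj K *m x).
  by rewrite adjM adjK !mulmxA.
exact: psdA.
Qed.

Lemma ampl_sandwich k n m (K : 'M[C]_(m, n)) (A : 'M[C]_(k * n)) :
  ampl (sandwich K) A = sandwich (kron (1%:M : 'M_k) K) A.
Proof.
apply/matrixP => r s.
case/mxvec_indexP: r => a i; case/mxvec_indexP: s => b j.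
rewrite /sandwich adj_kron adj1 mulmx_kron1E summxE.
have delta_sum (F : 'I_k -> 'I_k -> C) :
    \sum_(a' < k) \sum_(b' < k) delta_mx a' b' a b * F a' b' = F a b.
  rewrite -(sum_mul_eqr a (F^~ b)); apply: eq_bigr => a' _.
  rewrite -(sum_mul_eqr b (F a')) mulr_suml; apply: eq_bigr => b' _.
  by rewrite mxE -mulnb natrM (eq_sym a) (eq_sym b); ring.
under eq_bigr do rewrite summxE.
under eq_bigr do under eq_bigr do rewrite kronE.
rewrite delta_sum mxE; apply: eq_bigr => u _.
rewrite mul_kron1mxE !mxE; congr (_ * _).
by apply: eq_bigr => t _; rewrite mxE.
Qed.

Lemma sandwich_cp n m (K : 'M[C]_(m, n)) : completely_positive (sandwich K).
Proof. by move=> k A psdA; rewrite ampl_sandwich; exact: psd_sandwich. Qed.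

(* [K] is a coisometry, so [1 - K^* K] is an orthogonal projection [P] and
   [tr A - tr (K A K^* ) = tr (P A P)]. *)
Lemma sandwich_trace_nonincreasing n m (K : 'M[C]_(m, n)) :
  K *m adj K = 1%:M -> trace_nonincreasing (sandwich K).
Proof.
move=> coisoK A psdA; set P := 1%:M - adj K *m K.
have adjP : adj P = P by rewrite /P adjB adj1 adjM adjK.
have idemP : P *m P = P.
  rewrite /P mulmxBl !mulmxBr !mul1mx mulmx1 mulmxA -[adj K *m K *m adj K]mulmxA.
  by rewrite coisoK mulmx1 subrr subr0.
have -> : \tr (sandwich K A) = \tr A - \tr (sandwich P A).
  rewrite /sandwich mxtrace_mulC [\tr (P *m A *m _)]mxtrace_mulC adjP !mulmxA idemP.
  by rewrite /P mulmxBl mul1mx raddfB opprB addrC subrK.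
by rewrite gerBl; apply/psd_trace_ge0/psd_sandwich.
Qed.

Lemma prob_qt_sandwich n m (K : 'M[C]_(m, n)) :
  K *m adj K = 1%:M -> prob_qt (sandwich K).
Proof.
move=> coisoK; split; first exact: sandwich_is_linear.
by split; [exact: sandwich_cp | exact: sandwich_trace_nonincreasing].
Qed.

End Sandwich.

Section TripleProduct.
Variables (C : numClosedFieldType) (d : nat) (X : 'cV[C]_(d * d * d)).

Definition coord3 (a b c : 'I_d) : C := X (mxvec_index (mxvec_index a b) c) 0.

Lemma norm2_coord3 : norm2 X = \sum_a \sum_b \sum_c (coord3 a b c)^* * coord3 a b c.
Proof.
rewrite /norm2 /inner mxE !sum_mxvec_index; apply: eq_bigr => a _.
by apply: eq_bigr => b _; apply: eq_bigr => c _; rewrite adjE.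
Qed.

Lemma inner_kron3 (x y z : 'cV[C]_d) :
  inner X (kron (kron x y) z)
    = \sum_a \sum_b \sum_c (coord3 a b c)^* * (x a 0 * y b 0 * z c 0).
Proof.
rewrite /inner mxE !sum_mxvec_index; apply: eq_bigr => a _.
by apply: eq_bigr => b _; apply: eq_bigr => c _; rewrite adjE !kron_colE.
Qed.

End TripleProduct.

Section KrausOperator.
Variables (C : numClosedFieldType) (d : nat) (X : 'cV[C]_(d * d * d)) (w0 w1 : C).

Definition in_index (q : 'I_2) (r1 r2 r3 r4 : 'I_d) : 'I_(2 * (d * d) * (d * d)) :=
  mxvec_index (mxvec_index q (mxvec_index r1 r2)) (mxvec_index r3 r4).

Lemma sum_in_index (f : 'I_(2 * (d * d) * (d * d)) -> C) :
  \sum_k f k = \sum_q \sum_r1 \sum_r2 \sum_r3 \sum_r4 f (in_index q r1 r2 r3 r4).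
Proof.
rewrite sum_mxvec_index (sum_mxvec_index (fun qr => \sum_s f (mxvec_index qr s))).
apply: eq_bigr => q _.
rewrite (sum_mxvec_index (fun r => \sum_s f (mxvec_index (mxvec_index q r) s))).
by apply: eq_bigr => r1 _; apply: eq_bigr => r2 _; rewrite sum_mxvec_index.
Qed.

(* On the input [|q> |r1 r2> |r3 r4>], with [psi] in [r1, r2] and [phi] in [r3, r4],
   the branch [q = 0] contracts [<X|] against [r3 r1 r4] (i.e. [phi psi phi]) and
   outputs [r2]; the branch [q = 1] contracts against [r1 r3 r2] and outputs [r4]. *)
Definition kraus_entry (i : 'I_d) (q : 'I_2) (r1 r2 r3 r4 : 'I_d) : C :=
  if q == 0 then w0 * (coord3 X r3 r1 r4)^* * (r2 == i)%:R
  else w1 * (coord3 X r1 r3 r2)^* * (r4 == i)%:R.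

Definition kraus : 'M[C]_(d, 2 * (d * d) * (d * d)) :=
  \matrix_(i, k)
    let: (qr, s) := idx_pair k in let: (q, r) := idx_pair qr in
    kraus_entry i q (idx_pair r).1 (idx_pair r).2 (idx_pair s).1 (idx_pair s).2.

Lemma krausE i q r1 r2 r3 r4 :
  kraus i (in_index q r1 r2 r3 r4) = kraus_entry i q r1 r2 r3 r4.
Proof. by rewrite mxE !idx_pairK. Qed.

Lemma kraus_gram i j :
  (kraus *m adj kraus) i j = (w0 * w0^* + w1 * w1^*) * (i == j)%:R * norm2 X.
Proof.
rewrite mxE sum_in_index !big_ord_recl big_ord0 addr0 norm2_coord3 !mulrDl.
congr (_ + _).
- transitivity (\sum_r1 \sum_r2 (\sum_r3 \sum_r4
      w0 * w0^* * ((coord3 X r3 r1 r4)^* * coord3 X r3 r1 r4))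
      * (r2 == j)%:R * (r2 == i)%:R).
    apply: eq_bigr => r1 _; apply: eq_bigr => r2 _; rewrite !mulr_suml.
    apply: eq_bigr => r3 _; rewrite !mulr_suml; apply: eq_bigr => r4 _.
    by rewrite adjE !krausE /kraus_entry /= !rmorphM /= conjCK !conjC_nat; ring.
  under eq_bigr do rewrite sum_mul_eqr.
  rewrite -mulr_suml exchange_big [RHS]mulrAC; congr (_ * _).
  rewrite mulr_sumr; apply: eq_bigr => r3 _; rewrite mulr_sumr.
  by apply: eq_bigr => r1 _; rewrite mulr_sumr.
- transitivity (\sum_r1 \sum_r3 \sum_r2 \sum_r4
      w1 * w1^* * ((coord3 X r1 r3 r2)^* * coord3 X r1 r3 r2)
      * (r4 == j)%:R * (r4 == i)%:R).
    apply: eq_bigr => r1 _; rewrite exchange_big; apply: eq_bigr => r3 _.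
    apply: eq_bigr => r2 _; apply: eq_bigr => r4 _.
    by rewrite adjE !krausE /kraus_entry /= !rmorphM /= conjCK !conjC_nat; ring.
  rewrite !mulr_sumr; apply: eq_bigr => r1 _; rewrite !mulr_sumr.
  apply: eq_bigr => r3 _; rewrite !mulr_sumr; apply: eq_bigr => r2 _.
  by rewrite sum_mul_eqr; ring.
Qed.

Lemma kraus_mul_input (mu : 'cV[C]_2) (psi phi : 'cV[C]_d) :
  kraus *m kron (kron mu (kron psi psi)) (kron phi phi)
    = (w0 * mu 0 0 * inner X (kron (kron phi psi) phi)) *: psi
    + (w1 * mu 1 0 * inner X (kron (kron psi phi) psi)) *: phi.
Proof.
apply/matrixP => i k; rewrite [k]ord1 !mxE sum_in_index !big_ord_recl big_ord0 addr0.
have -> : lift ord0 ord0 = 1 :> 'I_2 by apply: val_inj.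
rewrite !inner_kron3; congr (_ + _).
- transitivity (\sum_r1 \sum_r2 (\sum_r3 \sum_r4
      w0 * mu 0 0 * (coord3 X r3 r1 r4)^* * (phi r3 0 * psi r1 0 * phi r4 0))
      * psi r2 0 * (r2 == i)%:R).
    apply: eq_bigr => r1 _; apply: eq_bigr => r2 _; rewrite !mulr_suml.
    apply: eq_bigr => r3 _; rewrite !mulr_suml; apply: eq_bigr => r4 _.
    by rewrite krausE !kron_colE /kraus_entry /=; ring.
  under eq_bigr do rewrite sum_mul_eqr.
  rewrite -mulr_suml exchange_big; congr (_ * _).
  rewrite !mulr_sumr; apply: eq_bigr => r3 _.
  rewrite !mulr_sumr; apply: eq_bigr => r1 _; rewrite !mulr_sumr.
  by apply: eq_bigr => r4 _; ring.
- transitivity (\sum_r1 \sum_r3 \sum_r2 \sum_r4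
      w1 * mu 1 0 * (coord3 X r1 r3 r2)^* * (psi r1 0 * phi r3 0 * psi r2 0)
      * phi r4 0 * (r4 == i)%:R).
    apply: eq_bigr => r1 _; rewrite exchange_big; apply: eq_bigr => r3 _.
    apply: eq_bigr => r2 _; apply: eq_bigr => r4 _.
    by rewrite krausE !kron_colE /kraus_entry /=; ring.
  rewrite !mulr_sumr mulr_suml; apply: eq_bigr => r1 _; rewrite !mulr_sumr mulr_suml.
  apply: eq_bigr => r3 _; rewrite !mulr_sumr mulr_suml; apply: eq_bigr => r2 _.
  by rewrite sum_mul_eqr; ring.
Qed.

End KrausOperator.

Lemma mul_sqrtC_conj (C : numClosedFieldType) (x : C) :
  0 <= x -> sqrtC x * (sqrtC x)^* = x.
Proof. by move=> x_ge0; rewrite geC0_conj ?sqrtC_ge0 // -expr2 sqrtCK. Qed.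

Lemma dm_normalize (C : numClosedFieldType) n (k : C) (v : 'cV[C]_n) :
  0 <= k -> norm2 v != 0 ->
  dm (sqrtC k *: v) = (k * norm2 v) *: dm ((sqrtC (norm2 v))^-1 *: v).
Proof.
move=> k_ge0 v_neq0; rewrite !dmZ scalerA mul_sqrtC_conj //; congr (_ *: _).
by rewrite fmorphV -invfM mul_sqrtC_conj ?norm2_ge0 // mulfK.
Qed.

Section Weights.
Variables (C : numClosedFieldType) (c1 c2 : C).
Hypotheses (c1_gt0 : 0 < c1) (c2_gt0 : 0 < c2).

Definition weight0 : C := sqrtC (c1 / (c1 + c2)).
Definition weight1 : C := sqrtC (c2 / (c1 + c2)).

Let sum_neq0 : c1 + c2 != 0. Proof. by rewrite gt_eqF ?addr_gt0. Qed.
Let frac1_ge0 : 0 <= c1 / (c1 + c2). Proof. by rewrite divr_ge0 ?ltW ?addr_gt0. Qed.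
Let frac2_ge0 : 0 <= c2 / (c1 + c2). Proof. by rewrite divr_ge0 ?ltW ?addr_gt0. Qed.

Lemma weights_normalized : weight0 * weight0^* + weight1 * weight1^* = 1.
Proof. by rewrite !mul_sqrtC_conj // -mulrDl divff. Qed.

Lemma weight0_sqrtC : weight0 * sqrtC c2 = sqrtC (c1 * c2 / (c1 + c2)).
Proof. by rewrite /weight0 -sqrtCM ?nnegrE ?(ltW c2_gt0) // mulrAC. Qed.

Lemma weight1_sqrtC : weight1 * sqrtC c1 = sqrtC (c1 * c2 / (c1 + c2)).
Proof. by rewrite /weight1 -sqrtCM ?nnegrE ?(ltW c1_gt0) // mulrAC [c2 * c1]mulrC. Qed.

Lemma kraus_output d (X : 'cV[C]_(d * d * d)) (psi phi : 'cV[C]_d) (alpha beta : C) :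
  let z1 := inner X (kron (kron phi psi) phi) in
  let z2 := inner X (kron (kron psi phi) psi) in
  `|z2| ^+ 2 = c1 -> `|z1| ^+ 2 = c2 ->
  kraus X weight0 weight1
    *m kron (kron (alpha *: ket0 C + beta *: ket1 C) (kron psi psi)) (kron phi phi)
  = sqrtC (c1 * c2 / (c1 + c2))
      *: ((alpha * (z1 / `|z1|)) *: psi + (beta * (z2 / `|z2|)) *: phi).
Proof.
have normE (z c : C) : `|z| ^+ 2 = c -> `|z| = sqrtC c by move=> <-; rewrite sqrCK.
move=> z1 z2 /normE z2E /normE z1E.
have sqrt_neq0 (c : C) : 0 < c -> sqrtC c != 0 by move=> c_gt0; rewrite sqrtC_eq0 gt_eqF.
rewrite kraus_mul_input z1E z2E scalerDr !scalerA !mxE /= !mulr1 !mulr0 addr0 add0r.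
rewrite -{1}weight0_sqrtC -weight1_sqrtC; congr (_ *: _ + _ *: _).
  by rewrite /z1; field; rewrite sqrt_neq0.
by rewrite /z2; field; rewrite sqrt_neq0.
Qed.

End Weights.

Theorem theorem8 (C : numClosedFieldType) (d : nat) (hd : (2 <= d)%N)
  (X : 'cV[C]_(d * d * d)) (hX : norm2 X = 1)
  (c1 c2 : C) (hc1 : 0 < c1) (hc2 : 0 < c2) :
  exists F : 'M[C]_(2 * (d * d) * (d * d)) -> 'M[C]_d,
    prob_qt F /\
    forall (psi phi : 'cV[C]_d) (alpha beta : C),
      norm2 psi = 1 -> norm2 phi = 1 ->
      `|inner X (kron (kron psi phi) psi)| ^+ 2 = c1 ->
      `|inner X (kron (kron phi psi) phi)| ^+ 2 = c2 ->
      alpha != 0 -> beta != 0 -> `|alpha| ^+ 2 + `|beta| ^+ 2 = 1 ->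
      let mu : 'cV[C]_2 := alpha *: ket0 C + beta *: ket1 C in
      let e1 := inner X (kron (kron phi psi) phi) / `|inner X (kron (kron phi psi) phi)| in
      let e2 := inner X (kron (kron psi phi) psi) / `|inner X (kron (kron psi phi) psi)| in
      let v : 'cV[C]_d := (alpha * e1) *: psi + (beta * e2) *: phi in
      let p := c1 * c2 / (c1 + c2) * norm2 v in
      let varphi : 'cV[C]_d := (sqrtC (norm2 v))^-1 *: v in
      p != 0 ->
      F (kron (kron (dm mu) (kron (dm psi) (dm psi))) (kron (dm phi) (dm phi)))
        = p *: dm varphi.
Proof.
exists (sandwich (kraus X (weight0 c1 c2) (weight1 c1 c2))); split.
  apply: prob_qt_sandwich; apply/matrixP => i j.
  by rewrite kraus_gram weights_normalized // hX mul1r mulr1 !mxE.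
move=> psi phi alpha beta _ _ h1 h2 _ _ _ mu e1 e2 v p varphi.
rewrite /p mulf_eq0 negb_or => /andP[_ v_neq0].
rewrite !kron_dm sandwich_dm kraus_output // dm_normalize //.
by rewrite divr_ge0 ?mulr_ge0 ?addr_ge0 ?ltW.
Qed.
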